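(* Let $A\in\mathbb{C}^{m\times n}$. Then the following are equivalent: (1) $A^{\mathfrak{m}}$ exists; (2) $\mathrm{Ind}(A^{\sim}A)=1$ and $\mathcal{N}(A^{\sim}A)\subseteq\mathcal{N}(A)$; (3) $\mathrm{Ind}(AA^{\sim})=1$ and $\mathcal{R}(A)\subseteq\mathcal{R}(AA^{\sim})$.
   Context: For a positive integer $k$, the Minkowski metric matrix of order $k$ is $G_k=\mathrm{diag}(1,-I_{k-1})$ (with $G_1=(1)$). For $A\in\mathbb{C}^{m\times n}$, the Minkowski adjoint is $A^{\sim}=G_nA^*G_m$, where $A^*$ is the conjugate transpose. The Minkowski inverse of $A$, denoted $A^{\mathfrak{m}}$, is a matrix $X\in\mathbb{C}^{n\times m}$ with $AXA=A$, $XAX=X$, $(AX)^{\sim}=AX$, $(XA)^{\sim}=XA$ (unique if it exists). For a square matrix $M$, $\mathrm{Ind}(M)$ is the smallest nonnegative integer $t$ with $\mathrm{rank}(M^{t+1})=\mathrm{rank}(M^t)$, where $M^0=I$. $\mathcal{R}(\cdot)$, $\mathcal{N}(\cdot)$ denote range and null space. *)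

(* Complex numbers: C := R[i] = complex R for R : realType
   (every realType is a complete archimedean ordered field, i.e. a copy of the reals). *)
From HB Require Import structures.
From mathcomp Require Import all_boot all_order all_algebra.
From mathcomp Require Import complex.
From mathcomp Require Import reals.
Set Implicit Arguments. Unset Strict Implicit. Unset Printing Implicit Defensive.
Import Order.TTheory GRing.Theory Num.Theory.
Local Open Scope ring_scope.

Section Minkowski.
Variable C : numClosedFieldType.

Definition mink_G (k : nat) : 'M[C]_k :=
  \matrix_(i < k, j < k) (if i == j then (if val i == 0%N then 1 else -1) else 0).

Definition ctrmx m n (A : 'M[C]_(m, n)) : 'M[C]_(n, m) := (map_mx Num.conj A)^T.

Definition madj m n (A : 'M[C]_(m, n)) : 'M[C]_(n, m) :=
  mink_G n *m ctrmx A *m mink_G m.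

Definition is_minkowski_inverse m n (A : 'M[C]_(m, n)) (X : 'M[C]_(n, m)) : Prop :=
  [/\ A *m X *m A = A, X *m A *m X = X,
      madj (A *m X) = A *m X & madj (X *m A) = X *m A].

(* Ind(M): smallest t >= 0 with rank(M^(t+1)) = rank(M^t).  Such a t <= n always
   exists, so searching in 0..n gives exactly that minimum. *)
Definition mxindex n (M : 'M[C]_n) : nat :=
  find (fun t => \rank (M ^+ t.+1) == \rank (M ^+ t)) (iota 0 n.+1).

Definition null_sub p m n (M : 'M[C]_(p, n)) (A : 'M[C]_(m, n)) : Prop :=
  forall x : 'cV[C]_n, M *m x = 0 -> A *m x = 0.

Definition range_sub m p q (A : 'M[C]_(m, p)) (M : 'M[C]_(m, q)) : Prop :=
  forall x : 'cV[C]_p, exists y : 'cV[C]_q, A *m x = M *m y.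

End Minkowski.

From HB Require Import structures.
From mathcomp Require Import all_boot all_order all_algebra.
From mathcomp Require Import complex.
From mathcomp Require Import reals.
Set Implicit Arguments. Unset Strict Implicit. Unset Printing Implicit Defensive.
Import Order.TTheory GRing.Theory Num.Theory.
Local Open Scope ring_scope.

(* The Minkowski adjoint is an involutive anti-automorphism, so A~A and AA~ are
   self-adjoint.  A self-adjoint square matrix M with rank (M^2) = rank M has a
   group inverse G (MGM = M, GMG = G, MG = GM), and G is again self-adjoint.
   Then G A~ is a Minkowski inverse of A as soon as A G (A~A) = A, which is what
   N(A~A) ⊆ N(A) gives; dually A~ G' works for the group inverse G' of AA~ when
   R(A) ⊆ R(AA~).  Conversely, from a Minkowski inverse X one reads off
   A = X~ (A~A) and A~ = X (AA~), hence A~A = (X X~) (A~A)^2, which forces the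
   index to be at most 1, as well as both subspace inclusions. *)

Section MinkowskiInverse.
Variable C : numClosedFieldType.

Lemma mink_G_sqr k : mink_G C k *m mink_G C k = 1%:M.
Proof.
apply/matrixP => i j; rewrite !mxE (bigD1 i) //= big1 => [|l /negbTE nli].
  rewrite !mxE eqxx addr0; have [ij|_] := eqVneq i j; last by rewrite mulr0.
  by subst j; case: ifP; rewrite ?mulrNN mulr1.
by rewrite !mxE eq_sym nli mul0r.
Qed.

Lemma ctrmx_mink_G k : ctrmx (mink_G C k) = mink_G C k.
Proof.
apply/matrixP => i j; rewrite !mxE eq_sym; case: eqVneq => [->|_].
  by case: ifP; rewrite ?rmorphN rmorph1.
by rewrite rmorph0.
Qed.

Lemma ctrmx_mul m n p (A : 'M[C]_(m, n)) (B : 'M[C]_(n, p)) :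
  ctrmx (A *m B) = ctrmx B *m ctrmx A.
Proof. by rewrite /ctrmx map_mxM trmx_mul. Qed.

Lemma ctrmxK m n (A : 'M[C]_(m, n)) : ctrmx (ctrmx A) = A.
Proof. by apply/matrixP => i j; rewrite !mxE conjCK. Qed.

Lemma madj_mul m n p (A : 'M[C]_(m, n)) (B : 'M[C]_(n, p)) :
  madj (A *m B) = madj B *m madj A.
Proof.
rewrite /madj ctrmx_mul !mulmxA.
by rewrite -[_ *m mink_G C n *m mink_G C n]mulmxA mink_G_sqr mulmx1.
Qed.

Lemma madjK m n (A : 'M[C]_(m, n)) : madj (madj A) = A.
Proof.
by rewrite /madj !ctrmx_mul ctrmxK !ctrmx_mink_G !mulmxA mink_G_sqr mul1mx
  -mulmxA mink_G_sqr mulmx1.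
Qed.

Lemma madj_mul_madjl m n (A : 'M[C]_(m, n)) : madj (madj A *m A) = madj A *m A.
Proof. by rewrite madj_mul madjK. Qed.

Lemma madj_mul_madjr m n (A : 'M[C]_(m, n)) : madj (A *m madj A) = A *m madj A.
Proof. by rewrite madj_mul madjK. Qed.

Lemma null_sub_mulmx p m n q (M : 'M[C]_(p, n)) (A : 'M[C]_(m, n)) (B : 'M[C]_(n, q)) :
  null_sub M A -> M *m B = 0 -> A *m B = 0.
Proof.
move=> MA MB0; apply/matrixP => i j.
have /matrixP/(_ i 0) : A *m (B *m delta_mx j (0 : 'I_1)) = 0.
  by apply: MA; rewrite mulmxA MB0 mul0mx.
by rewrite mulmxA -colE !mxE.
Qed.

Lemma range_sub_mulmx m p q (A : 'M[C]_(m, p)) (M : 'M[C]_(m, q)) :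
  range_sub A M -> exists W, A = M *m W.
Proof.
move=> AM; have [w Aw] := fin_all_exists (fun j : 'I_p => AM (delta_mx j 0)).
exists (\matrix_(i, j) w j i 0); apply/matrixP => i j.
have /matrixP/(_ i 0) := Aw j; rewrite -colE !mxE => ->.
by apply: eq_bigr => l _; rewrite mxE.
Qed.

Lemma mxindex_le1 k (M : 'M[C]_k) :
  (mxindex M <= 1)%N = (\rank (M *m M) == \rank M).
Proof.
rewrite /mxindex; case: k M => [|k] M; first by rewrite /= !thinmx0 eqxx.
rewrite /= expr0 expr1 expr2 -mulmxE mxrank1.
have [full|_] := eqVneq (\rank M) k.+1; last by case: eqP.
by rewrite full mxrankMfree /row_free full ?eqxx.
Qed.

Lemma mxrank_sqr_eq k (M Y : 'M[C]_k) :
  M = Y *m (M *m M) -> \rank (M *m M) = \rank M.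
Proof.
move=> MY; apply/eqP; rewrite eqn_leq mxrankM_maxl /=.
by rewrite {1}MY mxrankM_maxr.
Qed.

Definition group_inverse k (M G : 'M[C]_k) : Prop :=
  [/\ M *m G *m M = M, G *m M *m G = G & M *m G = G *m M].

Section FromFactors.
Variables (k : nat) (M Y Z : 'M[C]_k).
Hypotheses (MY : M = Y *m (M *m M)) (MZ : M = M *m M *m Z).

Lemma group_factors_comm : Y *m M = M *m Z.
Proof. by rewrite {1}MZ !mulmxA -[Y *m M *m M]mulmxA -MY. Qed.

Lemma group_inverse_of_factors : group_inverse M (Y *m M *m Z).
Proof.
have YM_MZ := group_factors_comm.
have MYM : M *m Y *m M = M by rewrite -mulmxA YM_MZ mulmxA -MZ.
have MZM : M *m Z *m M = M by rewrite -YM_MZ -mulmxA -MY.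
have MG : M *m (Y *m M *m Z) = M *m Z by rewrite !mulmxA MYM.
have GM : Y *m M *m Z *m M = M *m Z.
  by rewrite -!mulmxA (mulmxA M) MZM YM_MZ.
split; first by rewrite MG MZM.
  by rewrite -mulmxA MG mulmxA GM YM_MZ.
by rewrite MG GM.
Qed.

End FromFactors.

Lemma madj_group_inverse k (M : 'M[C]_k) :
  madj M = M -> \rank (M *m M) = \rank M ->
  exists2 G, group_inverse M G & madj G = G.
Proof.
move=> Msa rkM.
have /submxP [Y MY] : (M <= M *m M)%MS.
  by rewrite -(mxrank_leqif_sup (submxMl M M)).2 rkM.
have MZ : M = M *m M *m madj Y.
  by rewrite -{1}Msa {1}MY madj_mul (madj_mul M) Msa.
exists (Y *m M *m madj Y); first exact: group_inverse_of_factors.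
by rewrite madj_mul (madj_mul Y) madjK Msa mulmxA.
Qed.

Lemma madj_minkowski_inverse m n (A : 'M[C]_(m, n)) X :
  is_minkowski_inverse A X -> is_minkowski_inverse (madj A) (madj X).
Proof.
case=> AXA XAX AXsa XAsa; split; rewrite -!madj_mul ?mulmxA.
- by rewrite AXA.
- by rewrite XAX.
- by rewrite XAsa.
- by rewrite AXsa.
Qed.

Lemma minkowski_inverse_factorl m n (A : 'M[C]_(m, n)) X :
  is_minkowski_inverse A X -> A = madj X *m (madj A *m A).
Proof. by case=> AXA _ AXsa _; rewrite {1}(esym AXA) -AXsa madj_mul mulmxA. Qed.

Lemma minkowski_inverse_factorr m n (A : 'M[C]_(m, n)) X :
  is_minkowski_inverse A X -> A = (A *m madj A) *m madj X.
Proof. by case=> AXA _ _ XAsa; rewrite -{1}AXA -mulmxA -XAsa madj_mul mulmxA. Qed.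

Lemma minkowski_inverse_gram_rank m n (A : 'M[C]_(m, n)) X : is_minkowski_inverse A X ->
  \rank ((madj A *m A) *m (madj A *m A)) = \rank (madj A *m A).
Proof.
move=> AX; apply: (mxrank_sqr_eq (Y := X *m madj X)).
have /minkowski_inverse_factorl := madj_minkowski_inverse AX; rewrite !madjK => Aadj.
by rewrite {1}Aadj {1}(minkowski_inverse_factorl AX) !mulmxA.
Qed.

Lemma minkowski_inverse_null_sub m n (A : 'M[C]_(m, n)) X :
  is_minkowski_inverse A X -> null_sub (madj A *m A) A.
Proof.
by move=> /minkowski_inverse_factorl AX x Mx0; rewrite AX -mulmxA Mx0 mulmx0.
Qed.

Lemma minkowski_inverse_range_sub m n (A : 'M[C]_(m, n)) X :
  is_minkowski_inverse A X -> range_sub A (A *m madj A).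
Proof.
by move=> /minkowski_inverse_factorr AX x; exists (madj X *m x); rewrite {1}AX mulmxA.
Qed.

Lemma minkowski_inverse_of_null_sub m n (A : 'M[C]_(m, n)) :
  \rank ((madj A *m A) *m (madj A *m A)) = \rank (madj A *m A) ->
  null_sub (madj A *m A) A -> exists X, is_minkowski_inverse A X.
Proof.
set M := madj A *m A => rkM AM.
have Msa : madj M = M := madj_mul_madjl A.
have [G [MGM GMG MG_GM] Gsa] := madj_group_inverse Msa rkM.
have AGM : A *m (G *m M) = A.
  apply/eqP; rewrite -subr_eq0 -[X in _ - X]mulmx1 -mulmxBr; apply/eqP.
  by apply: (null_sub_mulmx AM); rewrite mulmxBr mulmx1 mulmxA MGM subrr.
exists (G *m madj A); split.
- by rewrite -mulmxA -(mulmxA G) -/M AGM.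
- by rewrite -[G *m _ *m A]mulmxA -/M (mulmxA _ G) GMG.
- by rewrite madj_mul madj_mul madjK Gsa mulmxA.
- by rewrite -mulmxA -/M madj_mul Msa Gsa MG_GM.
Qed.

Lemma minkowski_inverse_of_range_sub m n (A : 'M[C]_(m, n)) :
  \rank ((A *m madj A) *m (A *m madj A)) = \rank (A *m madj A) ->
  range_sub A (A *m madj A) -> exists X, is_minkowski_inverse A X.
Proof.
set N := A *m madj A => rkN AN.
have Nsa : madj N = N := madj_mul_madjr A.
have [G [NGN GNG NG_GN] Gsa] := madj_group_inverse Nsa rkN.
have [W AW] := range_sub_mulmx AN.
exists (madj A *m G); split.
- by rewrite mulmxA -/N {1}AW mulmxA NGN -AW.
- by rewrite -mulmxA (mulmxA A) -/N -mulmxA (mulmxA G) GNG.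
- by rewrite mulmxA -/N madj_mul Nsa Gsa NG_GN.
- by rewrite madj_mul madj_mul madjK Gsa mulmxA.
Qed.

End MinkowskiInverse.

Theorem theorem5p3 (R : realType) (m n : nat) (Hm : (0 < m)%N) (Hn : (0 < n)%N)
    (A : 'M[R[i]]_(m, n)) :
  [<-> (exists X : 'M[R[i]]_(n, m), is_minkowski_inverse A X);
       (mxindex (madj A *m A) <= 1)%N /\ null_sub (madj A *m A) A;
       (mxindex (A *m madj A) <= 1)%N /\ range_sub A (A *m madj A)].
Proof.
rewrite !mxindex_le1; tfae.
- case=> X AX; split; first exact/eqP/(minkowski_inverse_gram_rank AX).
  exact: minkowski_inverse_null_sub AX.
- case=> /eqP rkM AM; have [X AX] := minkowski_inverse_of_null_sub rkM AM.
  have /madj_minkowski_inverse/minkowski_inverse_gram_rank := AX.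
  rewrite madjK => rkN; split; first exact/eqP.
  exact: minkowski_inverse_range_sub AX.
- by case=> /eqP rkN AN; apply: minkowski_inverse_of_range_sub.
Qed.
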